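(* Let $\langle A,\to\rangle$ be a conditional algebra. Then for all $U,V\subseteq\mathrm{Ul}(A)$, $$U\to_{T_A}V=\bigcap_{(Y,O)}\ \bigcup_{\substack{a,b\in A\\ Y\subseteq\varphi(a),\ \varphi(b)\subseteq O}}\varphi(a\to b),$$ where $(Y,O)$ ranges over all pairs with $Y$ a closed subset of the Stone space of $A$ with $Y\subseteq U$ and $O$ an open subset with $V\subseteq O$; i.e., $\to_{T_A}$ is the $\pi$-extension of $\to$ to the canonical extension $\mathcal{P}(\mathrm{Ul}(A))$ of $A$. Moreover, $\langle\mathcal{P}(\mathrm{Ul}(A)),\to_{T_A}\rangle$ is a conditional algebra, so the variety of conditional algebras is closed under canonical extensions.
   Context: A conditional algebra is a pair $\langle A,\to\rangle$ where $A$ is a Boolean algebra and $\to$ is a binary operation on $A$ such that for all $a,b,c$: $a\to 1=1$; $(a\to b)\wedge(a\to c)=a\to(b\wedge c)$; $(a\vee b)\to c\le (a\to c)\wedge(b\to c)$. $\mathrm{Ul}(A)$ is the set of ultrafilters of $A$ with the Stone topology, $\varphi(a)=\{u: a\in u\}$. Filters include the improper filter $A$, and for a filter $F$, $\varphi(F)=\{u\in\mathrm{Ul}(A): F\subseteq u\}$. For $X,Y\subseteq A$, $D^{\to}_X(Y)=\{b\in A:\exists a\in Y,\ a\to b\in X\}$. $T_A(u,Z,v)$ holds iff there is a filter $F$ with $Z=\varphi(F)$ and $D^{\to}_u(F)\subseteq v$; $T_A(u,Z)=\{v:T_A(u,Z,v)\}$. For $U,V\subseteq\mathrm{Ul}(A)$,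 $U\to_{T_A}V=\{u: \text{for all } Z\subseteq U,\ T_A(u,Z)\subseteq V\}$. The canonical extension of $A$ is identified with $\mathcal{P}(\mathrm{Ul}(A))$ via $\varphi$. *)

From HB Require Import structures.
From mathcomp Require Import all_boot all_order.
From mathcomp Require Import boolp classical_sets.
Set Implicit Arguments. Unset Strict Implicit. Unset Printing Implicit Defensive.
Import Order.TTheory.
Export SetOrder.Exports.
Local Open Scope classical_set_scope.

(* A Boolean algebra is a complemented distributive lattice with top and
   bottom: [ctbDistrLatticeType d].  Meet = Order.meet, join = Order.join,
   complement = Order.compl, order = Order.le. *)

Definition conditional_algebra d (A : ctbDistrLatticeType d)
  (imp : A -> A -> A) : Prop :=
  [/\ (forall a : A, imp a Order.top = Order.top),
      (forall a b c : A, Order.meet (imp a b) (imp a c) = imp a (Order.meet b c))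
    & (forall a b c : A,
         (imp (Order.join a b) c <= Order.meet (imp a c) (imp b c))%O)].

Section Stone.
Context {d : Order.disp_t} (A : ctbDistrLatticeType d).

(* Filters (the improper filter [setT] included). *)
Definition is_filter (F : set A) : Prop :=
  [/\ F Order.top,
      (forall a b : A, F a -> (a <= b)%O -> F b)
    & (forall a b : A, F a -> F b -> F (Order.meet a b))].

Definition proper_filter (F : set A) : Prop := is_filter F /\ F <> setT.

Definition ultrafilter (u : set A) : Prop :=
  proper_filter u /\ (forall G : set A, proper_filter G -> u `<=` G -> G = u).

Definition Ul : Type := {u : set A | ultrafilter u}.

Definition phi (a : A) : set Ul := [set u : Ul | proj1_sig u a].
Definition phiF (F : set A) : set Ul := [set u : Ul | F `<=` proj1_sig u].

Definition stone_open (O : set Ul) : Prop :=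
  forall u, O u -> exists a : A, phi a u /\ phi a `<=` O.
Definition stone_closed (Y : set Ul) : Prop := stone_open (~` Y).

Variable imp : A -> A -> A.

Definition Dimp (X Y : set A) : set A :=
  [set b | exists2 a, Y a & X (imp a b)].

Definition TA (u : Ul) (Z : set Ul) (v : Ul) : Prop :=
  exists F : set A, [/\ is_filter F, Z = phiF F
                      & Dimp (proj1_sig u) F `<=` proj1_sig v].

Definition TAset (u : Ul) (Z : set Ul) : set Ul := [set v | TA u Z v].

Definition impT (U V : set Ul) : set Ul :=
  [set u | forall Z : set Ul, Z `<=` U -> TAset u Z `<=` V].

Definition pi_ext (U V : set Ul) : set Ul :=
  [set u | forall Y O : set Ul,
      stone_closed Y -> Y `<=` U -> stone_open O -> V `<=` O ->
      exists a b : A, [/\ Y `<=` phi a, phi b `<=` O & phi (imp a b) u]].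

End Stone.

(* Let u lie in U ->_T V and let (Y, O) be a closed/open pair around (U, V).
   The clopen supersets of Y form a filter F with phi(F) = Y, and the set
   D_u(F) is a filter by the conditional algebra axioms.  Every ultrafilter
   containing D_u(F) is a T_A(u, Y)-successor, hence lies in V and so in O;
   by compactness some b in D_u(F) already has phi(b) inside O, which gives
   a in F with a -> b in u.  Conversely, if T_A(u, phi(F), v) with
   phi(F) inside U but v outside V, apply the pi-condition to the closed set
   phi(F) and the open set Ul(A) minus {v}: it yields a in F and b not in v
   with a -> b in u, contradicting D_u(F) in v.  That ->_T is a conditional
   algebra operation needs no hypothesis on -> at all: it is defined by a
   universal condition on the successors. *)

From mathcomp Require Import all_boot all_order.
From mathcomp Require Import boolp classical_sets.
Import Order.Theory.
Set Implicit Arguments. Unset Strict Implicit.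
Local Open Scope classical_set_scope.

Section Filters.
Context {d : Order.disp_t} (A : ctbDistrLatticeType d).
Implicit Types (a b c x : A) (F G u : set A).

Lemma filterT F : is_filter F -> F \top%O.
Proof. by case. Qed.

Lemma filterS F a b : is_filter F -> (a <= b)%O -> F a -> F b.
Proof. by case=> _ up _ ab /up; apply. Qed.

Lemma filterI F a b : is_filter F -> F a -> F b -> F (a `&` b)%O.
Proof. by case=> _ _; apply. Qed.

Lemma filter_compl F a c : is_filter F -> F c -> (c `&` a <= \bot)%O -> F (~` a)%O.
Proof. by move=> fF Fc; rewrite lex0 disj_leC => /filterS; apply. Qed.

Lemma proper_filterP F : is_filter F -> proper_filter F <-> ~ F \bot%O.
Proof.
move=> fF; split=> [[_ FT] Fbot|Fnbot].
  by apply: FT; apply/seteqP; split=> // x _; exact: filterS fF (le0x x) Fbot.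
by split=> // FT; apply: Fnbot; rewrite FT.
Qed.

Definition adjoin F a : set A := [set x | exists2 c, F c & (c `&` a <= x)%O].

Lemma adjoin_filter F a : is_filter F -> is_filter (adjoin F a).
Proof.
move=> fF; split.
- by exists \top%O; [exact: filterT | exact: lex1].
- by move=> x y [c Fc cx] xy; exists c => //; apply: le_trans xy.
- move=> x y [c Fc cx] [c' Fc' cy]; exists (c `&` c')%O; first exact: filterI.
  by rewrite -[a]meetxx meetACA; apply: leI2.
Qed.

Lemma sub_adjoin F a : F `<=` adjoin F a.
Proof. by move=> x Fx; exists x => //; apply: leIl. Qed.

Lemma adjoin_mem F a : is_filter F -> adjoin F a a.
Proof. by move=> fF; exists \top%O; [exact: filterT | rewrite meet1x]. Qed.

Lemma ultrafilter_filter u : ultrafilter u -> is_filter u.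
Proof. by case=> [[]]. Qed.

Lemma ultrafilter_bot u : ultrafilter u -> ~ u \bot%O.
Proof. by case=> [[fu ?] _]; apply/proper_filterP. Qed.

Lemma ultrafilterC u a : ultrafilter u -> u (~` a)%O <-> ~ u a.
Proof.
move=> uu; have fu := ultrafilter_filter uu; split=> [uCa ua|nua].
  by apply: (ultrafilter_bot uu); rewrite -(meetxC a); apply: filterI.
have fua := adjoin_filter a fu.
have [pua|] := pselect (proper_filter (adjoin u a)).
  by case: nua; rewrite -(proj2 uu _ pua (@sub_adjoin u a)); apply: adjoin_mem.
move/(proper_filterP fua)/contrapT => [c uc]; exact: filter_compl.
Qed.

Lemma ultrafilterU u a b : ultrafilter u -> u (a `|` b)%O -> u a \/ u b.
Proof.
move=> uu uab; apply: contrapT => /not_orP[].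
move=> /(ultrafilterC _ uu) uCa /(ultrafilterC _ uu) uCb.
have := filterI (ultrafilter_filter uu) uCa uCb.
by rewrite -complU => /(ultrafilterC _ uu).
Qed.

Lemma filterU_bigcup_chain F (K : set (set A)) :
  is_filter F -> (forall X, K X -> is_filter (F `|` X)) -> total_on K subset ->
  is_filter (F `|` \bigcup_(X in K) X).
Proof.
move=> fF fK Ktot; set B := \bigcup_(X in K) X.
have FXB X : K X -> F `|` X `<=` F `|` B by move=> KX; apply/setUS/bigcup_sup.
have common x y : (F `|` B) x -> (F `|` B) y ->
    exists2 G, is_filter G /\ G `<=` F `|` B & G x /\ G y.
  move=> [Fx|[X KX Xx]] [Fy|[Y KY Yy]].
  - by exists F; split=> //; apply: subsetUl.
  - by exists (F `|` Y); split; [exact: fK | exact: FXB | left | right].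
  - by exists (F `|` X); split; [exact: fK | exact: FXB | right | left].
  - have [XY|YX] := Ktot _ _ KX KY.
      by exists (F `|` Y); split; [exact: fK | exact: FXB | right; apply: XY | right].
    by exists (F `|` X); split; [exact: fK | exact: FXB | right | right; apply: YX].
split; first by left; apply: filterT.
- move=> x y /[dup] Fx /(common x x Fx) [G [fG GFB] [Gx _]] xy.
  exact/GFB/(filterS fG xy).
- move=> x y Fx Fy; have [G [fG GFB] [Gx Gy]] := common x y Fx Fy.
  exact/GFB/(filterI fG).
Qed.

Lemma ultrafilter_ext F : is_filter F -> ~ F \bot%O ->
  exists2 u, ultrafilter u & F `<=` u.
Proof.
move=> fF nFbot.
(* Zorn is applied to the X such that F `|` X is a proper filter, rather than
   to the proper filters containing F, so that the empty chain is harmless. *)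
pose P := [set X | is_filter (F `|` X) /\ ~ (F `|` X) \bot%O].
have [|M [[fFM nFMbot] Mmax]] := @Zorn_bigcup _ P.
  move=> K KP Ktot; split; first by apply: filterU_bigcup_chain => // X /KP[].
  by case=> [//|[X /KP[_ nFXbot] Xbot]]; apply: nFXbot; right.
exists (F `|` M); last exact: subsetUl.
split; first exact/proper_filterP.
move=> G /[dup] pG [fG _] FMG.
have FG : F `|` G = G by apply/setUidr/(subset_trans _ FMG)/subsetUl.
apply/seteqP; split=> // x Gx; right; apply: contrapT => nMx.
apply: (Mmax G); first by split=> [y My|GM]; [apply/FMG; right | exact/nMx/GM].
by split; rewrite FG //; apply/(proper_filterP fG).
Qed.

Lemma ultrafilter_avoid F a : is_filter F -> ~ F a ->
  exists u, [/\ ultrafilter u, F `<=` u & ~ u a].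
Proof.
move=> fF nFa; have fFa := adjoin_filter (~` a)%O fF.
have [|u uu Fau] := ultrafilter_ext fFa.
  by case=> c Fc /(filter_compl fF Fc); rewrite complK.
exists u; split=> //; first by move=> x /sub_adjoin /Fau.
by apply/(ultrafilterC _ uu)/Fau/adjoin_mem.
Qed.

End Filters.

Section StoneSpace.
Context {d : Order.disp_t} (A : ctbDistrLatticeType d).
Implicit Types (a b c : A) (D F : set A) (Y O : set (Ul A)).

Lemma Ul_ultrafilter (w : Ul A) : ultrafilter (sval w).
Proof. exact: proj2_sig. Qed.

Lemma Ul_filter (w : Ul A) : is_filter (sval w).
Proof. exact/ultrafilter_filter/Ul_ultrafilter. Qed.

Lemma phiC a : phi (~` a)%O = ~` phi a.
Proof. by apply/seteqP; split=> w; case: (ultrafilterC a (Ul_ultrafilter w)). Qed.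

Lemma phiS a b : (a <= b)%O -> phi a `<=` phi b.
Proof. by move=> ab w; apply: filterS (Ul_filter w) ab. Qed.

Lemma phiI a b : phi (a `&` b)%O = phi a `&` phi b.
Proof.
apply/seteqP; split=> [w wab|w [wa wb]]; last exact: filterI (Ul_filter w) wa wb.
by split; apply: phiS wab; [apply: leIl | apply: leIr].
Qed.

Lemma phiU a b : phi (a `|` b)%O = phi a `|` phi b.
Proof.
apply/seteqP; split=> [w /(ultrafilterU (Ul_ultrafilter w))//|w].
by case; apply: phiS; [apply: leUl | apply: leUr].
Qed.

Lemma phi0 : phi (\bot%O : A) = set0.
Proof. by apply/seteqP; split=> // w /(ultrafilter_bot (Ul_ultrafilter w)). Qed.

Lemma phiT : phi (\top%O : A) = setT.
Proof. by apply/seteqP; split=> // w _; apply: filterT (Ul_filter w). Qed.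

Lemma phiF_closed F : stone_closed (phiF F).
Proof.
move=> w /nonsubset[c [Fc nwc]]; exists (~` c)%O; rewrite phiC; split=> // v nvc.
by apply: contra_not nvc; apply.
Qed.

Lemma phiF_sub_phi F a : is_filter F -> phiF F `<=` phi a -> F a.
Proof.
move=> fF Fa; apply: contrapT => nFa.
have [u [uu Fu nua]] := ultrafilter_avoid fF nFa.
exact/nua/(Fa (exist _ u uu)).
Qed.

Definition clopen_nbhs Y : set A := [set a | Y `<=` phi a].

Lemma clopen_nbhs_filter Y : is_filter (clopen_nbhs Y).
Proof.
split=> [|a b Ya ab|a b Ya Yb]; first by rewrite /clopen_nbhs /= phiT.
- exact: subset_trans Ya (phiS ab).
- by rewrite /clopen_nbhs /= phiI => y Yy; split; [apply: Ya | apply: Yb].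
Qed.

Lemma phiF_clopen_nbhs Y : stone_closed Y -> phiF (clopen_nbhs Y) = Y.
Proof.
move=> cY; apply/seteqP; split=> [w wY|y Yy a Ya]; last exact: Ya.
apply: contrapT => nYw; have [a [wa aY]] := cY w nYw.
have /wY : clopen_nbhs Y (~` a)%O by rewrite /clopen_nbhs /= phiC => y Yy /aY.
by move/(ultrafilterC _ (Ul_ultrafilter w)).
Qed.

Lemma Ul_val_inj : injective (fun w : Ul A => sval w).
Proof. by move=> [w uw] [v uv] /= wv; apply: eq_exist. Qed.

Lemma Ul_separate (w v : Ul A) : w <> v -> exists a, phi a w /\ ~ phi a v.
Proof.
move=> wv; apply: contrapT => /forallNP nsep; apply/wv/Ul_val_inj/esym.
apply: (proj2 (Ul_ultrafilter w) _ (proj1 (Ul_ultrafilter v))) => a wa.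
by apply: contrapT => nva; apply: (nsep a).
Qed.

Lemma stone_closed1 (v : Ul A) : stone_closed [set v].
Proof.
move=> w wv; have [a [wa nva]] := Ul_separate wv.
by exists a; split=> // x xa /= xv; apply: nva; rewrite -xv.
Qed.

Definition avoiding D O : set A :=
  [set x | exists b c, [/\ D b, phi c `<=` O & (b `&` ~` c <= x)%O]].

Lemma avoiding_filter D O : is_filter D -> is_filter (avoiding D O).
Proof.
move=> fD; split=> [|x y [b [c [Db cO bcx]]] xy|].
- exists \top%O, \bot%O; split; [exact: filterT | by rewrite phi0 | exact: lex1].
- by exists b, c; split=> //; apply: le_trans xy.
move=> x y [b [c [Db cO bcx]]] [b' [c' [Db' c'O bcy]]].
exists (b `&` b')%O, (c `|` c')%O; split; first exact: filterI.
  by rewrite phiU => w [/cO|/c'O].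
by rewrite complU meetACA; apply: leI2.
Qed.

(* If no b in D had phi b inside O, then avoiding D O would be proper, and
   an ultrafilter extending it would lie in phiF D but outside O. *)
Lemma compact_phiF D O : is_filter D -> stone_open O -> phiF D `<=` O ->
  exists2 b, D b & phi b `<=` O.
Proof.
move=> fD oO DO; apply: contrapT => nDO.
have nbot : ~ avoiding D O \bot%O.
  move=> [b [c [Db cO]]]; rewrite lex0 disj_leC complK => bc.
  by apply: nDO; exists b => //; apply: subset_trans (phiS bc) cO.
have [w uw avw] := ultrafilter_ext (avoiding_filter O fD) nbot.
have Dw : D `<=` w.
  by move=> b Db; apply: avw; exists b, \bot%O; split; rewrite ?phi0 ?compl0 ?meetx1.
have [c [wc cO]] := oO (exist _ w uw) (DO (exist _ w uw) Dw).
have wCc : w (~` c)%O.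
  by apply: avw; exists \top%O, c; split; rewrite ?meet1x //; apply: filterT.
exact: (iffLR (ultrafilterC c uw) wCc wc).
Qed.

End StoneSpace.

Section PiExtension.
Context {d : Order.disp_t} (A : ctbDistrLatticeType d) (imp : A -> A -> A).
Implicit Types (a b c : A) (X F : set A) (U V : set (Ul A)).

Lemma impT_conditional_algebra :
  conditional_algebra (impT imp : set (Ul A) -> set (Ul A) -> set (Ul A)).
Proof.
split=> [U|U V W|U V W].
- by apply/seteqP; split.
- apply/seteqP; split=> [u [uV uW] Z ZU v Tv|u uVW].
    by split; [apply: uV ZU v Tv | apply: uW ZU v Tv].
  by split=> Z ZU v Tv; have [] := uVW Z ZU v Tv.
- apply/subsetPset => u uUV; split=> Z ZU; apply: uUV;
    apply: subset_trans ZU _; [exact: subsetUl | exact: subsetUr].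
Qed.

Lemma pi_ext_sub_impT U V : pi_ext imp U V `<=` impT imp U V.
Proof.
move=> u piu Z ZU v [F [fF ZF DFv]]; rewrite {Z}ZF in ZU.
apply: contrapT => nVv.
have VO : V `<=` ~` [set v] by move=> w Vw wv; apply: nVv; rewrite -wv.
have [a [b [Fa bO uab]]] :=
  piu _ _ (phiF_closed (F := F)) ZU (stone_closed1 (v := v)) VO.
by apply: (bO v) => //; apply: DFv; exists a => //; apply: phiF_sub_phi Fa.
Qed.

Hypothesis cA : conditional_algebra imp.

Lemma le_impr a b c : (b <= c)%O -> (imp a b <= imp a c)%O.
Proof. by case: cA => _ impI _ bc; rewrite -(meet_idPl bc) -impI leIr. Qed.

Lemma le_impl a a' c : (a <= a')%O -> (imp a' c <= imp a c)%O.
Proof.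
case: cA => _ _ impU aa'; rewrite -(join_idPr aa').
exact: le_trans (impU _ _ _) (leIl _ _).
Qed.

Lemma Dimp_filter X F : is_filter X -> is_filter F -> is_filter (Dimp imp X F).
Proof.
case: cA => imp1 impI _ fX fF.
split=> [|b c [a Fa Xab] bc|b c [a Fa Xab] [a' Fa' Xa'c]].
- by exists \top%O; rewrite ?imp1; apply: filterT.
- by exists a => //; apply: filterS fX (le_impr a bc) Xab.
- exists (a `&` a')%O; first exact: filterI.
  rewrite -impI; apply: (filterI fX).
  + by apply: filterS fX (le_impl b (leIl a a')) Xab.
  + by apply: filterS fX (le_impl c (leIr a' a)) Xa'c.
Qed.

Lemma impT_sub_pi_ext U V : impT imp U V `<=` pi_ext imp U V.
Proof.
move=> u Tu Y O cY YU oO VO.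
have fY := clopen_nbhs_filter Y.
have YZU : phiF (clopen_nbhs Y) `<=` U by rewrite phiF_clopen_nbhs.
have DO : phiF (Dimp imp (sval u) (clopen_nbhs Y)) `<=` O.
  by move=> w wD; apply/VO/(Tu _ YZU); exists (clopen_nbhs Y).
have [b [a Ya uab] bO] := compact_phiF (Dimp_filter (Ul_filter u) fY) oO DO.
by exists a, b.
Qed.

Lemma impT_pi_ext U V : impT imp U V = pi_ext imp U V.
Proof. by apply/seteqP; split; [apply: impT_sub_pi_ext | apply: pi_ext_sub_impT]. Qed.

End PiExtension.

Theorem theorem2p14 (d : Order.disp_t) (A : ctbDistrLatticeType d)
  (imp : A -> A -> A) :
  conditional_algebra imp ->
  (forall U V : set (Ul A), impT imp U V = pi_ext imp U V) /\
  conditional_algebra (impT imp : set (Ul A) -> set (Ul A) -> set (Ul A)).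
Proof.
move=> cA; split; [exact: impT_pi_ext | exact: impT_conditional_algebra].
Qed.
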